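(* Let $n\ge 3$ be an odd integer and $(\mathcal{C},\Sigma)$ an $n$-angulated category. Let $\mathcal{S}$ be the set of $n$-angulated subcategories of $\mathcal{C}$ that are both complete and dense, and let $\operatorname{Sub}(K_0(\mathcal{C}))$ be the set of subgroups of $K_0(\mathcal{C})$. Then the maps $\mathcal{A}\mapsto\operatorname{Im}K_0(\mathcal{A})$ and $H\mapsto\mathcal{A}_H$ are mutually inverse bijections between $\mathcal{S}$ and $\operatorname{Sub}(K_0(\mathcal{C}))$, where $\mathcal{A}_H$ is the full subcategory of $\mathcal{C}$ consisting of the objects $A$ with $[A]\in H$ (with $n$-angles the $n$-angles of $\mathcal{C}$ all of whose objects lie in $\mathcal{A}_H$).
   Context: All categories are small. Fix an integer $n\ge 3$. Let $\mathcal{C}$ be an additive category with an automorphism $\Sigma$. An $n$-$\Sigma$-sequence in $\mathcal{C}$ is a diagram $A_1\xrightarrow{\alpha_1}A_2\xrightarrow{\alpha_2}\cdots\xrightarrow{\alpha_{n-1}}A_n\xrightarrow{\alpha_n}\Sigma A_1$. Its left rotation is $A_2\xrightarrow{\alpha_2}\cdots\xrightarrow{\alpha_n}\Sigma A_1\xrightarrow{(-1)^n\Sigma\alpha_1}\Sigma A_2$. A morphism from $(A_\bullet,\alpha)$ to $(B_\bullet,\beta)$ is a tuple $(\varphi_1,\dots,\varphi_n)$, $\varphi_i:A_i\to B_i$, with $\beta_i\varphi_i=\varphi_{i+1}\alpha_i$ for $1\le i\le n-1$ and $\beta_n\varphi_n=(\Sigma\varphi_1)\alpha_n$; it is an isomorphism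 if all $\varphi_i$ are isomorphisms. Direct sums of sequences are taken termwise. $(\mathcal{C},\Sigma)$ is $n$-angulated if it is equipped with a collection $\mathscr N$ of $n$-$\Sigma$-sequences, called $n$-angles, such that: (N1)(a) $\mathscr N$ is closed under direct sums, direct summands and isomorphisms of $n$-$\Sigma$-sequences; (b) for every object $A$, the trivial sequence $A\xrightarrow{1}A\to0\to\cdots\to0\to\Sigma A$ is in $\mathscr N$; (c) every morphism $A_1\to A_2$ is the first morphism of some $n$-angle; (N2) an $n$-$\Sigma$-sequence is in $\mathscr N$ iff its left rotation is; (N3) given $n$-angles $(A_\bullet,\alpha),(B_\bullet,\beta)$ and $\varphi_1:A_1\to B_1$, $\varphi_2:A_2\to B_2$ with $\beta_1\varphi_1=\varphi_2\alpha_1$, there exist $\varphi_3,\dots,\varphi_n$ making $(\varphi_1,\dots,\varphi_n)$ a morphism; (N4) in (N3) the $\varphi_i$ can be chosen so that the mapping cone $A_2\oplus B_1\to A_3\oplus B_2\to\cdots\to\Sigma A_1\oplus B_n\to\Sigma A_2\oplus\Sigma B_1$, with maps $\left[\begin{smallmatrix}-\alpha_{i+1}&0\\ \varphi_{i+1}&\beta_i\end{smallmatrix}\right]$ ($1\le i\le n-1$) and last map $\left[\begin{smallmatrix}-\Sigma\alpha_1&0\\ \Sigma\varphi_1&\beta_n\end{smallmatrix}\right]$, is an $n$-angle. Grothendieck group: $F(\mathcal{C})$ is the free abelian group on isomorphism classes $\langle A\rangle$ of objects; for an $n$-angle $A_\bullet$, $\chi(A_\bullet)=\sum_{i=1}^n(-1)^{i+1}\langle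 A_i\rangle$; $R(\mathcal{C})$ is generated by all $\chi(A_\bullet)$, together with $\langle 0\rangle$ when $n$ is even; $K_0(\mathcal{C})=F(\mathcal{C})/R(\mathcal{C})$, $[A]$ the class of $\langle A\rangle$. An additive functor $L:\mathcal{C}\to\mathcal{C}'$ between $n$-angulated categories is $n$-angulated if there is a natural isomorphism $\eta:L\circ\Sigma\to\Sigma'\circ L$ such that $L$ sends each $n$-angle $(A_\bullet,\alpha)$ to the $n$-angle $L A_1\xrightarrow{L\alpha_1}\cdots\xrightarrow{L\alpha_{n-1}}LA_n\xrightarrow{\eta\circ L\alpha_n}\Sigma'LA_1$. An $n$-angulated subcategory of $(\mathcal{C},\Sigma)$ is a full subcategory $\mathcal{A}$, closed under isomorphisms, on which $\Sigma$ restricts to an automorphism, equipped with $n$-angles making $(\mathcal{A},\Sigma)$ $n$-angulated, such that the inclusion $\mathcal{A}\to\mathcal{C}$ is $n$-angulated. $\mathcal{A}$ is dense if every object of $\mathcal{C}$ is a direct summand of an object of $\mathcal{A}$; complete if whenever an $n$-angle $A_1\to\cdots\to A_n\to\Sigma A_1$ in $\mathcal{C}$ has $n-1$ of $A_1,\dots,A_n$ in $\mathcal{A}$, the remaining one is in $\mathcal{A}$. $\operatorname{Im}K_0(\mathcal{A})$ is the image of the homomorphism $K_0(\mathcal{A})\to K_0(\mathcal{C})$, $[A]\mapsto[A]$, induced by the inclusion. *)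

From Stdlib Require Import ClassicalEpsilon.
From HB Require Import structures.
From mathcomp Require Import all_boot all_algebra.
Set Implicit Arguments. Unset Strict Implicit. Unset Printing Implicit Defensive.
Import GRing.Theory.
Local Open Scope ring_scope.

Record AddCat := {
  Obj : Type;
  Hom : Obj -> Obj -> zmodType;
  comp : forall a b c : Obj, Hom b c -> Hom a b -> Hom a c;
  idm : forall a : Obj, Hom a a;
  compA : forall a b c d (h : Hom c d) (g : Hom b c) (f : Hom a b),
      comp h (comp g f) = comp (comp h g) f;
  comp1m : forall a b (f : Hom a b), comp (idm b) f = f;
  compm1 : forall a b (f : Hom a b), comp f (idm a) = f;
  compDl : forall a b c (g g' : Hom b c) (f : Hom a b),
      comp (g + g') f = comp g f + comp g' f;
  compDr : forall a b c (g : Hom b c) (f f' : Hom a b),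
      comp g (f + f') = comp g f + comp g f';
  zobj : Obj;
  zobj_init : forall a (f : Hom zobj a), f = 0;
  zobj_term : forall a (f : Hom a zobj), f = 0;
  bsum : Obj -> Obj -> Obj;
  bin1 : forall a b, Hom a (bsum a b);
  bin2 : forall a b, Hom b (bsum a b);
  bpr1 : forall a b, Hom (bsum a b) a;
  bpr2 : forall a b, Hom (bsum a b) b;
  bp1i1 : forall a b, comp (bpr1 a b) (bin1 a b) = idm a;
  bp2i2 : forall a b, comp (bpr2 a b) (bin2 a b) = idm b;
  bp1i2 : forall a b, comp (bpr1 a b) (bin2 a b) = 0;
  bp2i1 : forall a b, comp (bpr2 a b) (bin1 a b) = 0;
  bsumE : forall a b, comp (bin1 a b) (bpr1 a b)
                      + comp (bin2 a b) (bpr2 a b) = idm (bsum a b)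
}.

Arguments Hom {_}.
Arguments comp {_ a b c}.
Arguments idm {_}.
Arguments zobj {_}.
Arguments bsum {_}.
Arguments bin1 {_}.
Arguments bin2 {_}.
Arguments bpr1 {_}.
Arguments bpr2 {_}.

Record AddAuto (C : AddCat) := {
  Sob : Obj C -> Obj C;
  Smor : forall a b : Obj C, Hom a b -> Hom (Sob a) (Sob b);
  Smor_comp : forall a b c (g : Hom b c) (f : Hom a b),
      Smor (comp g f) = comp (Smor g) (Smor f);
  Smor_id : forall a, Smor (idm a) = idm (Sob a);
  Smor_add : forall a b (f g : Hom a b), Smor (f + g) = Smor f + Smor g;
  Sob_bij : bijective Sob;
  Smor_bij : forall a b, bijective (fun f : Hom a b => Smor f)
}.

Arguments Sob {_}.
Arguments Smor {_} _ {a b}.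

Section NAngulated.
Variables (C : AddCat) (S : AddAuto C) (n : nat).

Definition isIso (a b : Obj C) (f : Hom a b) :=
  exists g : Hom b a, comp g f = idm a /\ comp f g = idm b.
Definition isoObj (a b : Obj C) := exists f : Hom a b, isIso f.

Definition castH (a b a' b' : Obj C) (ea : a = a') (eb : b = b') (f : Hom a b)
  : Hom a' b' :=
  match ea in _ = x return Hom x b' with
  | erefl => match eb in _ = y return Hom a y with erefl => f end end.

(* transport used only where the objects are provably equal;
   (junk value 0 otherwise) *)
Definition hcast (a b a' b' : Obj C) (f : Hom a b) : Hom a' b' :=
  match excluded_middle_informative (a = a'),
        excluded_middle_informative (b = b') with
  | left ea, left eb => castH ea eb f
  | _, _ => 0
  end.
Arguments hcast {a b a' b'}.

(* n-Sigma-sequences A_1 -> ... -> A_n -> Sigma A_1, indexed from 0: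
   sob i = A_{i+1} (i < n), smor i = alpha_{i+1} (i < n-1),
   slast = alpha_n.  Values at larger indices are irrelevant. *)
Record nSseq := NSeq {
  sob : nat -> Obj C;
  smor : forall i, Hom (sob i) (sob i.+1);
  slast : Hom (sob n.-1) (Sob S (sob 0))
}.

Definition inP (P : Obj C -> Prop) (A : nSseq) := forall i, (i < n)%N -> P (sob A i).

Definition seq_hom (A B : nSseq) (phi : forall i, Hom (sob A i) (sob B i)) :=
  (forall i, (i.+1 < n)%N -> comp (smor B i) (phi i) = comp (phi i.+1) (smor A i)) /\
  comp (slast B) (phi n.-1) = comp (Smor S (phi 0)) (slast A).

Definition seq_iso (A B : nSseq) :=
  exists phi : forall i, Hom (sob A i) (sob B i),
    seq_hom phi /\ forall i, (i < n)%N -> isIso (phi i).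

Definition dmap (a b a' b' : Obj C) (f : Hom a a') (g : Hom b b')
  : Hom (bsum a b) (bsum a' b') :=
  comp (bin1 a' b') (comp f (bpr1 a b)) + comp (bin2 a' b') (comp g (bpr2 a b)).

Definition dsum (A B : nSseq) : nSseq :=
  {| sob := fun i => bsum (sob A i) (sob B i);
     smor := fun i => dmap (smor A i) (smor B i);
     slast := comp (Smor S (bin1 (sob A 0) (sob B 0)))
                   (comp (slast A) (bpr1 (sob A n.-1) (sob B n.-1)))
            + comp (Smor S (bin2 (sob A 0) (sob B 0)))
                   (comp (slast B) (bpr2 (sob A n.-1) (sob B n.-1))) |}.

Definition tob (a : Obj C) (i : nat) : Obj C :=
  match i with 0 | 1 => a | _ => zobj end.
Definition triv (a : Obj C) : nSseq :=
  {| sob := tob a;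
     smor := fun i => match i return Hom (tob a i) (tob a i.+1) with
                      | 0 => idm a | _ => 0 end;
     slast := 0 |}.

(* left rotation A_2 -> ... -> A_n -> Sigma A_1 -> Sigma A_2 *)
Definition robj (A : nSseq) (i : nat) : Obj C :=
  if (i.+1 < n)%N then sob A i.+1 else Sob S (sob A 0).
Definition rot (A : nSseq) : nSseq :=
  {| sob := robj A;
     smor := fun i => if (i.+2 < n)%N then hcast (smor A i.+1) else hcast (slast A);
     slast := hcast (if odd n then - Smor S (smor A 0) else Smor S (smor A 0)) |}.

Definition cone (A B : nSseq) (phi : forall i, Hom (sob A i) (sob B i)) : nSseq :=
  {| sob := fun i => bsum (robj A i) (sob B i);
     smor := fun i =>
       comp (bin1 (robj A i.+1) (sob B i.+1))
            (comp (- smor (rot A) i) (bpr1 (robj A i) (sob B i)))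
     + comp (bin2 (robj A i.+1) (sob B i.+1))
            (comp (hcast (phi i.+1) : Hom (robj A i) (sob B i.+1))
                  (bpr1 (robj A i) (sob B i)))
     + comp (bin2 (robj A i.+1) (sob B i.+1))
            (comp (smor B i) (bpr2 (robj A i) (sob B i)));
     slast :=
       comp (Smor S (bin1 (robj A 0) (sob B 0)))
            (comp (hcast (- Smor S (smor A 0)) : Hom (robj A n.-1) (Sob S (robj A 0)))
                  (bpr1 (robj A n.-1) (sob B n.-1)))
     + comp (Smor S (bin2 (robj A 0) (sob B 0)))
            (comp (hcast (Smor S (phi 0)) : Hom (robj A n.-1) (Sob S (sob B 0)))
                  (bpr1 (robj A n.-1) (sob B n.-1)))
     + comp (Smor S (bin2 (robj A 0) (sob B 0)))
            (comp (slast B) (bpr2 (robj A n.-1) (sob B n.-1))) |}.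

(* Axioms (N1)-(N4) for a collection N of n-Sigma-sequences in the full
   subcategory of objects satisfying P (P = everything for C itself). *)
Record IsNang (P : Obj C -> Prop) (N : nSseq -> Prop) : Prop := {
  N_in : forall A, N A -> inP P A;
  N_sum : forall A B, N A -> N B -> N (dsum A B);
  N_summand : forall A B, inP P A -> inP P B -> N (dsum A B) -> N A;
  N_iso : forall A B, inP P B -> seq_iso A B -> N A -> N B;
  N_triv : forall a, P a -> N (triv a);
  N_ext : forall (a b : Obj C) (f : Hom a b), P a -> P b ->
     exists A, N A /\
       exists (e0 : sob A 0 = a) (e1 : sob A 1 = b), castH e0 e1 (smor A 0) = f;
  N_rot : forall A, inP P A -> (N A <-> N (rot A));
  N_mor : forall A B, N A -> N B ->
     forall (f0 : Hom (sob A 0) (sob B 0)) (f1 : Hom (sob A 1) (sob B 1)),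
       comp (smor B 0) f0 = comp f1 (smor A 0) ->
       exists phi : forall i, Hom (sob A i) (sob B i),
         phi 0 = f0 /\ phi 1 = f1 /\ seq_hom phi;
  N_cone : forall A B, N A -> N B ->
     forall (f0 : Hom (sob A 0) (sob B 0)) (f1 : Hom (sob A 1) (sob B 1)),
       comp (smor B 0) f0 = comp f1 (smor A 0) ->
       exists phi : forall i, Hom (sob A i) (sob B i),
         phi 0 = f0 /\ phi 1 = f1 /\ seq_hom phi /\ N (cone phi)
}.

Definition twist (eta : forall a, Hom (Sob S a) (Sob S a)) (A : nSseq) : nSseq :=
  {| sob := sob A; smor := smor A; slast := comp (eta (sob A 0)) (slast A) |}.

Variable NC : nSseq -> Prop.

Definition nsubcat (P : Obj C -> Prop) (NA : nSseq -> Prop) : Prop :=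
  [/\ (forall a b, isoObj a b -> P a -> P b),
      (forall a, P a <-> P (Sob S a)),
      (P zobj /\ forall a b, P a -> P b -> P (bsum a b)),
      IsNang P NA &
      exists eta : forall a, Hom (Sob S a) (Sob S a),
        [/\ (forall a, P a -> isIso (eta a)),
            (forall a b (f : Hom a b), P a -> P b ->
                comp (eta b) (Smor S f) = comp (Smor S f) (eta a)) &
            (forall A, NA A -> NC (twist eta A))]].

Definition complete (P : Obj C -> Prop) : Prop :=
  forall A, NC A -> forall j, (j < n)%N ->
    (forall i, (i < n)%N -> (i != j)%N -> P (sob A i)) -> P (sob A j).

Definition dense (P : Obj C -> Prop) : Prop :=
  forall c : Obj C, exists a c' : Obj C, P a /\ isoObj (bsum c c') a.

Definition inS (P : Obj C -> Prop) : Prop :=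
  (exists NA, nsubcat P NA) /\ complete P /\ dense P.

(* Elements of the free abelian group F(C) on isomorphism classes are
   represented by formal sums (lists of (coefficient, object)); the
   element they denote is its coefficient function on iso classes. *)
Definition FS := seq (int * Obj C).
Definition isob (a b : Obj C) : bool :=
  if excluded_middle_informative (isoObj a b) then true else false.
Definition coef (s : FS) (a : Obj C) : int :=
  \sum_(p <- s) (if isob p.2 a then p.1 else 0).

(* chi(A) = sum_i (-1)^(i+1) <A_i>  (1-based i) *)
Definition chi (A : nSseq) : FS := [seq ((-1) ^+ i, sob A i) | i <- iota 0 n].

Definition inR (f : Obj C -> int) : Prop :=
  exists (L : seq (int * nSseq)) (k : int),
    List.Forall (fun p => NC p.2) L /\
    forall a, f a = \sum_(p <- L) p.1 * coef (chi p.2) a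
                    + (if odd n then 0 else k * coef [:: (1, zobj)] a).

Definition feq (s t : FS) : Prop := inR (fun a => coef s a - coef t a).

(* K_0(C) = F(C)/R(C), as the type of equivalence classes *)
Definition K0 := {X : FS -> Prop | exists s, X = feq s}.
Definition cls (s : FS) : K0 := exist _ (feq s) (ex_intro _ s erefl).
Definition K0repr (X : K0) : FS :=
  proj1_sig (constructive_indefinite_description _ (proj2_sig X)).
Definition K0zero : K0 := cls [::].
Definition K0add (X Y : K0) : K0 := cls (K0repr X ++ K0repr Y).
Definition K0opp (X : K0) : K0 := cls [seq (- p.1, p.2) | p <- K0repr X].
Definition K0cl (a : Obj C) : K0 := cls [:: (1, a)].

Definition isSubgroup (H : K0 -> Prop) : Prop :=
  [/\ H K0zero, (forall x y, H x -> H y -> H (K0add x y)) &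
      (forall x, H x -> H (K0opp x))].

(* Im K_0(A): image of K_0(A) -> K_0(C); as K_0(A) is a quotient of F(A),
   this is the image of F(A) (formal sums of objects of A) in K_0(C). *)
Definition ImK0 (P : Obj C -> Prop) (x : K0) : Prop :=
  exists s : FS, List.Forall (fun p => P p.2) s /\ x = cls s.

Definition AH (H : K0 -> Prop) (a : Obj C) : Prop := H (K0cl a).

Definition restrN (P : Obj C -> Prop) (A : nSseq) : Prop := NC A /\ inP P A.

End NAngulated.

(* For odd [n] the Grothendieck group is generated by single classes: the
   rotated trivial n-angles give [S x] = - [x] and [x (+) y] = [x] + [y], so every
   element of [K0] is some [x].  Hence [A_H] is closed under sums, suspension and
   isomorphism, it is dense because [x (+) S x] lies in it, and it is complete
   because the alternating sum of an n-angle vanishes in [K0].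
   Conversely let [P] be dense and complete.  Stable equivalence
   (a ~ b iff a (+) c and b (+) c lie in [P] for some c) turns the objects into a
   group in which exactly the objects of [P] vanish.  Padding an n-angle with
   rotated trivial n-angles until all its objects lie in [P] (the last one by
   completeness) shows that its alternating sum vanishes in that group, so the map
   to it factors through [K0]; hence [[a]] in [Im K0 P] forces [a] in [P]. *)

From Stdlib Require Import ClassicalEpsilon ProofIrrelevance FunctionalExtensionality PropExtensionality.
From HB Require Import structures.
From mathcomp Require Import all_boot all_algebra zify.
From mathcomp Require boolp.
Set Implicit Arguments. Unset Strict Implicit. Unset Printing Implicit Defensive.
Import GRing.Theory.
Local Open Scope ring_scope.

Section AdditiveCategory.
Variable C : AddCat.
Implicit Types a b c d x y z : Obj C.

Lemma comp0l a b c (f : Hom a b) : comp (0 : Hom b c) f = 0.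
Proof.
have h := compDl (0 : Hom b c) 0 f; rewrite addr0 in h.
by apply: (addrI (comp (0 : Hom b c) f)); rewrite addr0 -h.
Qed.

Lemma comp0r a b c (g : Hom b c) : comp g (0 : Hom a b) = 0.
Proof.
have h := compDr g (0 : Hom a b) 0; rewrite addr0 in h.
by apply: (addrI (comp g (0 : Hom a b))); rewrite addr0 -h.
Qed.

Lemma compNl a b c (g : Hom b c) (f : Hom a b) : comp (- g) f = - comp g f.
Proof. by apply/eqP; rewrite -addr_eq0 -compDl addNr comp0l. Qed.

Lemma compNr a b c (g : Hom b c) (f : Hom a b) : comp g (- f) = - comp g f.
Proof. by apply/eqP; rewrite -addr_eq0 -compDr addNr comp0r. Qed.

Definition isZero z :=
  (forall a (f : Hom z a), f = 0) /\ (forall a (f : Hom a z), f = 0).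

Lemma isZero_zobj : isZero (@zobj C).
Proof. by split; [apply: zobj_init | apply: zobj_term]. Qed.

Lemma isIso_id a : isIso (idm a).
Proof. by exists (idm a); rewrite comp1m. Qed.

Lemma isoObj_refl a : isoObj a a.
Proof. by exists (idm a); apply: isIso_id. Qed.

Lemma isoObj_sym a b : isoObj a b -> isoObj b a.
Proof. by move=> [f [g [h1 h2]]]; exists g, f. Qed.

Lemma isoObj_trans a b c : isoObj a b -> isoObj b c -> isoObj a c.
Proof.
move=> [f [f' [h1 h2]]] [g [g' [k1 k2]]]; exists (comp g f), (comp f' g'); split.
  by rewrite compA -(compA f') k1 compm1.
by rewrite compA -(compA g) h2 compm1.
Qed.

Lemma isoObj_zero z z' : isZero z -> isZero z' -> isoObj z z'.
Proof.
move=> [z1 _] [z1' _]; exists 0, 0; split.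
  by rewrite (z1 _ (idm z)) comp0l.
by rewrite (z1' _ (idm z')) comp0l.
Qed.

Lemma comp_bp1i1 a b x (f : Hom x a) : comp (bpr1 a b) (comp (bin1 a b) f) = f.
Proof. by rewrite compA bp1i1 comp1m. Qed.
Lemma comp_bp2i2 a b x (f : Hom x b) : comp (bpr2 a b) (comp (bin2 a b) f) = f.
Proof. by rewrite compA bp2i2 comp1m. Qed.
Lemma comp_bp1i2 a b x (f : Hom x b) : comp (bpr1 a b) (comp (bin2 a b) f) = 0.
Proof. by rewrite compA bp1i2 comp0l. Qed.
Lemma comp_bp2i1 a b x (f : Hom x a) : comp (bpr2 a b) (comp (bin1 a b) f) = 0.
Proof. by rewrite compA bp2i1 comp0l. Qed.
Lemma comp_bsumE a b x (f : Hom x (bsum a b)) :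
  comp (bin1 a b) (comp (bpr1 a b) f) + comp (bin2 a b) (comp (bpr2 a b) f) = f.
Proof. by rewrite !compA -compDl bsumE comp1m. Qed.

End AdditiveCategory.

Ltac csimp := repeat progress (rewrite ?compDl ?compDr -?compA
  ?comp_bp1i1 ?comp_bp2i2 ?comp_bp1i2 ?comp_bp2i1 ?bp1i1 ?bp2i2 ?bp1i2 ?bp2i1
  ?comp0l ?comp0r ?comp1m ?compm1 ?addr0 ?add0r ?compNl ?compNr ?oppr0
  ?bsumE ?comp_bsumE); try done.

Section Biproducts.
Variable C : AddCat.
Implicit Types a b c d x y z : Obj C.

Lemma isoObj_biprod a b x (i1 : Hom a x) (i2 : Hom b x) (p1 : Hom x a) (p2 : Hom x b) :
  comp p1 i1 = idm a -> comp p2 i2 = idm b -> comp p1 i2 = 0 -> comp p2 i1 = 0 ->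
  comp i1 p1 + comp i2 p2 = idm x -> isoObj (bsum a b) x.
Proof.
move=> e11 e22 e12 e21 eS.
exists (comp i1 (bpr1 a b) + comp i2 (bpr2 a b)).
exists (comp (bin1 a b) p1 + comp (bin2 a b) p2); split.
  rewrite !compDl !compDr -!compA !(compA p1) !(compA p2) e11 e22 e12 e21.
  by rewrite !comp0l !comp0r !comp1m !addr0 add0r bsumE.
rewrite !compDl !compDr -!compA !(compA (bpr1 a b)) !(compA (bpr2 a b)).
by rewrite bp1i1 bp2i2 bp1i2 bp2i1 !comp0l !comp0r !comp1m addr0 add0r.
Qed.

Lemma isoObj_bsumC a b : isoObj (bsum a b) (bsum b a).
Proof.
apply: (@isoObj_biprod _ _ _ (bin2 b a) (bin1 b a) (bpr2 b a) (bpr1 b a)).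
- exact: bp2i2.
- exact: bp1i1.
- exact: bp2i1.
- exact: bp1i2.
- by rewrite addrC bsumE.
Qed.

Lemma isoObj_bsumA a b c : isoObj (bsum a (bsum b c)) (bsum (bsum a b) c).
Proof.
apply: (@isoObj_biprod _ _ _ (comp (bin1 _ _) (bin1 a b))
   (comp (bin1 _ _) (comp (bin2 a b) (bpr1 b c)) + comp (bin2 _ _) (bpr2 b c))
   (comp (bpr1 a b) (bpr1 _ c))
   (comp (bin1 b c) (comp (bpr2 a b) (bpr1 _ c)) + comp (bin2 b c) (bpr2 _ c))); csimp.
by rewrite addrA -compDr comp_bsumE bsumE.
Qed.

Lemma isoObj_bsum a b a' b' :
  isoObj a a' -> isoObj b b' -> isoObj (bsum a b) (bsum a' b').
Proof.
move=> [f [f' [h1 h2]]] [g [g' [k1 k2]]].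
apply: (@isoObj_biprod _ _ _ (comp (bin1 a' b') f) (comp (bin2 a' b') g)
   (comp f' (bpr1 a' b')) (comp g' (bpr2 a' b'))).
- by rewrite -compA (compA (bpr1 _ _)) bp1i1 comp1m h1.
- by rewrite -compA (compA (bpr2 _ _)) bp2i2 comp1m k1.
- by rewrite -compA (compA (bpr1 _ _)) bp1i2 comp0l comp0r.
- by rewrite -compA (compA (bpr2 _ _)) bp2i1 comp0l comp0r.
- by rewrite -!compA !(compA f) !(compA g) h2 k2 !comp1m bsumE.
Qed.

Lemma isoObj_bsum0 a z : isZero z -> isoObj (bsum a z) a.
Proof.
move=> [z1 _]; apply: (@isoObj_biprod _ _ _ (idm a) 0 (idm a) 0); csimp.
Qed.

Lemma isoObj_bsumACA a b c d :
  isoObj (bsum (bsum a b) (bsum c d)) (bsum (bsum a c) (bsum b d)).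
Proof.
apply: isoObj_trans (isoObj_sym (isoObj_bsumA _ _ _)) _.
apply: isoObj_trans _ (isoObj_bsumA _ _ _).
apply: isoObj_bsum; first exact: isoObj_refl.
apply: isoObj_trans (isoObj_bsumA _ _ _) _.
apply: isoObj_trans _ (isoObj_sym (isoObj_bsumA _ _ _)).
by apply: isoObj_bsum; [apply: isoObj_bsumC | apply: isoObj_refl].
Qed.

Lemma isZero_bsum z z' : isZero z -> isZero z' -> isZero (bsum z z').
Proof.
move=> [z1 z2] [z1' z2']; split=> a f.
  rewrite -[f]compm1 -bsumE compDr !compA.
  by rewrite (z1 _ (comp f _)) (z1' _ (comp f _)) !comp0l addr0.
rewrite -[f]comp1m -bsumE compDl -!compA.
by rewrite (z2 _ (comp _ f)) (z2' _ (comp _ f)) !comp0r addr0.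
Qed.

Lemma isIso_bpr1 x z : isZero z -> isIso (bpr1 x z).
Proof.
move=> [_ z2]; exists (bin1 x z); split; last exact: bp1i1.
by rewrite -bsumE (z2 _ (bpr2 x z)) comp0r addr0.
Qed.

End Biproducts.

Section Suspension.
Variables (C : AddCat) (S : AddAuto C).

Lemma Smor0 a b : Smor S (0 : Hom a b) = 0.
Proof.
have h := Smor_add S (0 : Hom a b) 0; rewrite addr0 in h.
by apply: (addrI (Smor S (0 : Hom a b))); rewrite addr0 -h.
Qed.

Lemma Sob_surj a : exists a', Sob S a' = a.
Proof. by case: (Sob_bij S) => g _ K; exists (g a). Qed.

Lemma Smor_surj a b (f : Hom (Sob S a) (Sob S b)) : exists g : Hom a b, Smor S g = f.
Proof. by case: (Smor_bij S a b) => g _ K; exists (g f); apply: K. Qed.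

Lemma isZero_Sob z : isZero z -> isZero (Sob S z).
Proof.
move=> [z1 z2]; split=> a f; have [a' ea] := Sob_surj a; subst a.
  by have [g <-] := Smor_surj f; rewrite (z1 _ g) Smor0.
by have [g <-] := Smor_surj f; rewrite (z2 _ g) Smor0.
Qed.

End Suspension.

Section Rotation.
Variables (C : AddCat) (S : AddAuto C) (n : nat) (N : nSseq S n -> Prop).
Hypothesis hN : IsNang (fun _ => True) N.

Lemma rot_N A : N A -> N (rot A).
Proof. by move=> NA; apply: (proj1 (N_rot hN (fun _ _ => I))). Qed.

Lemma iter_rot_N j A : N A -> N (iter j (@rot C S n) A).
Proof. by move=> NA; elim: j => //= j IH; apply: rot_N. Qed.

Lemma tobE (Y : Obj C) m : tob Y m = if (m <= 1)%N then Y else zobj.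
Proof. by case: m => [|[|m]]. Qed.

Lemma sob_iter_rot j A i : (j < n)%N -> (i < n)%N ->
  sob (iter j (@rot C S n) A) i =
  if (i + j < n)%N then sob A (i + j) else Sob S (sob A (i + j - n)).
Proof.
elim: j i => [|j IH] i hj hi; first by rewrite addn0 hi.
rewrite iterS /= /robj; case: ifP => hi1.
  by rewrite IH ?addSnnS //; apply: ltnW.
rewrite IH ?(ltnW hj) //; last by lia.
rewrite add0n; have -> : (i + j.+1 < n)%N = false by lia.
by have -> : (i + j.+1 - n)%N = j by lia.
Qed.

End Rotation.

Definition fs_eval (C : AddCat) (V : zmodType) (g : Obj C -> V) (s : FS C) : V :=
  \sum_(p <- s) g p.2 *~ p.1.

Section AlternatingSum.
Variables (C : AddCat) (S : AddAuto C) (n : nat).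
Variables (V : zmodType) (g : Obj C -> V).

Definition sgn (i : nat) : int := (-1) ^+ i.

Definition altsum (A : nSseq S n) : V := \sum_(i <- iota 0 n) g (sob A i) *~ sgn i.

Lemma fs_eval_chi A : fs_eval g (chi A) = altsum A.
Proof. exact: big_map. Qed.

Lemma sgnS m : sgn m.+1 = - sgn m.
Proof. by rewrite /sgn exprS mulN1r. Qed.

Lemma sgn_even m : ~~ odd m -> sgn m = 1.
Proof. by move=> h; rewrite /sgn -signr_odd (negbTE h). Qed.

Lemma sgnK m : sgn m * sgn m = 1.
Proof. by rewrite /sgn -exprD addnn -signr_odd odd_double. Qed.

Lemma sum_iota_ord (F : nat -> V) : \sum_(i <- iota 0 n) F i = \sum_(i < n) F i.
Proof. by rewrite -(big_mkord xpredT) /index_iota subn0. Qed.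

Lemma sum_delta (v : V) m : (m < n)%N ->
  \sum_(i <- iota 0 n) (if i == m then v else 0) *~ sgn i = v *~ sgn m.
Proof.
move=> hm; rewrite sum_iota_ord (bigD1 (Ordinal hm)) //= eqxx big1 ?addr0 // => i ne.
have -> : (nat_of_ord i == m) = false.
  by apply/negbTE; apply: contra ne => /eqP e; apply/eqP; apply: val_inj.
by rewrite mul0rz.
Qed.

Lemma sum_sgn (v : V) m : \sum_(i <- iota 0 m) v *~ sgn i = if odd m then v else 0.
Proof.
elim: m => [|m IH]; first by rewrite big_nil.
rewrite -addn1 iotaD big_cat IH big_seq1 add0n addn1 /= /sgn -signr_odd.
by case: (odd m) => /=; rewrite ?expr0 ?expr1 ?mulrN1z ?mulr1z ?addrN ?add0r.
Qed.

Lemma altsum_adjacent (T : nSseq S n) m v : (m.+1 < n)%N ->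
  (forall i, (i < n)%N -> g (sob T i) = if (i == m) || (i == m.+1) then v else 0) ->
  altsum T = 0.
Proof.
move=> hm hT; rewrite /altsum.
rewrite (eq_big_seq (fun i => (if i == m then v else 0) *~ sgn i
                          + (if i == m.+1 then v else 0) *~ sgn i)); last first.
  move=> i; rewrite mem_iota add0n => /andP [_ hi]; rewrite hT //.
  case: (eqVneq i m) => [->|ne]; last by rewrite /= ?mul0rz ?add0r.
  have -> : (m == m.+1) = false by lia.
  by rewrite mul0rz addr0.
by rewrite big_split /= !sum_delta // ?(ltnW hm) // sgnS mulrNz addrN.
Qed.

Lemma altsum_dsum A B : (forall a b, g (bsum a b) = g a + g b) ->
  altsum (dsum A B) = altsum A + altsum B.
Proof.
by move=> gD; rewrite /altsum -big_split; apply: eq_bigr => i _ /=; rewrite gD mulrzDl.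
Qed.

Lemma altsum_triv_zobj : odd n -> altsum (triv S n zobj) = g zobj.
Proof.
move=> hodd; rewrite /altsum (eq_bigr (fun i => g zobj *~ sgn i)).
  by rewrite sum_sgn hodd.
by move=> i _ /=; rewrite tobE; case: ifP.
Qed.

Hypothesis g_iso : forall a b, isoObj a b -> g a = g b.
Hypothesis g_zobj : g zobj = 0.

Lemma g_isZero z : isZero z -> g z = 0.
Proof. by move=> hz; rewrite (g_iso (isoObj_zero hz (isZero_zobj C))). Qed.

Lemma altsum_triv Y : (1 < n)%N -> altsum (triv S n Y) = 0.
Proof.
move=> hn; apply: (altsum_adjacent (m := 0) (v := g Y)) => // i hi /=.
by rewrite tobE; case: i hi => [|[|i]] //= _; rewrite g_zobj.
Qed.

Lemma altsum_iter_rot_triv Y j : (2 <= j)%N -> (j < n)%N ->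
  altsum (iter j (@rot C S n) (triv S n Y)) = 0.
Proof.
move=> h2 hj; apply: (altsum_adjacent (m := (n - j)%N) (v := g (Sob S Y))).
  by lia.
move=> i hi; rewrite sob_iter_rot // /= !tobE.
case: ifP => h1.
  have -> : (i + j <= 1)%N = false by lia.
  have -> : ((i == n - j) || (i == (n - j).+1))%N = false by lia.
  by rewrite g_zobj.
case: ifP => h3; first by have -> : ((i == n - j) || (i == (n - j).+1))%N by lia.
have -> : ((i == n - j) || (i == (n - j).+1))%N = false by lia.
by rewrite g_isZero //; apply/isZero_Sob/isZero_zobj.
Qed.

Lemma altsum_rot_triv x : (2 < n)%N -> odd n ->
  altsum (rot (triv S n x)) = g x + g (Sob S x).
Proof.
move=> hn hodd; rewrite /altsum.
rewrite (eq_big_seq (fun i => (if i == 0%N then g x else 0) *~ sgn i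
                          + (if i == n.-1 then g (Sob S x) else 0) *~ sgn i)); last first.
  move=> i; rewrite mem_iota add0n => /andP [_ hi] /=; rewrite /robj.
  case: ifP => h1.
    have -> : (i == n.-1) = false by lia.
    by case: i hi h1 => [|i] hi h1 /=; rewrite ?g_zobj !mul0rz ?addr0.
  have -> : (i == n.-1) = true by lia.
  have -> : (i == 0%N) = false by lia.
  by rewrite mul0rz add0r.
rewrite big_split /= !sum_delta; try lia.
by rewrite sgn_even ?sgn_even //; rewrite -subn1; lia.
Qed.

(* The objects of this sum are [x (+) 0], [x (+) S Y], [0 (+) S Y], then zero objects. *)
Lemma altsum_triv_dsum_rot x Y : (2 < n)%N ->
  altsum (dsum (triv S n x) (iter n.-1 (@rot C S n) (triv S n Y))) =
  g (bsum x zobj) - g (bsum x (Sob S Y)) + g (bsum zobj (Sob S Y)).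
Proof.
move=> hn; rewrite /altsum.
rewrite (eq_big_seq (fun i => (if i == 0%N then g (bsum x zobj) else 0) *~ sgn i
     + (if i == 1%N then g (bsum x (Sob S Y)) else 0) *~ sgn i
     + (if i == 2%N then g (bsum zobj (Sob S Y)) else 0) *~ sgn i)); last first.
  move=> i; rewrite mem_iota add0n => /andP [_ hi] /=.
  rewrite sob_iter_rot //=; last by lia.
  case: i hi => [|[|[|i]]] hi /=.
  - have -> : (0 + n.-1 < n)%N by lia.
    rewrite tobE; have -> : (0 + n.-1 <= 1)%N = false by lia.
    by rewrite !mul0rz !addr0.
  - have -> : (1 + n.-1 < n)%N = false by lia.
    have -> : (1 + n.-1 - n)%N = 0%N by lia.
    by rewrite !mul0rz addr0 add0r.
  - have -> : (2 + n.-1 < n)%N = false by lia.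
    have -> : (2 + n.-1 - n)%N = 1%N by lia.
    by rewrite !mul0rz !add0r.
  have -> : (i.+3 + n.-1 < n)%N = false by lia.
  have -> : (i.+3 + n.-1 - n)%N = i.+2 by lia.
  rewrite /= g_isZero ?mul0rz ?addr0 //.
  by apply: isZero_bsum; [apply: isZero_zobj | apply/isZero_Sob/isZero_zobj].
rewrite !big_split /= !sum_delta; try lia.
by rewrite (sgn_even (m := 2)) // (sgn_even (m := 0)) // /sgn expr1 !mulr1z mulrN1z.
Qed.

End AlternatingSum.

Lemma exist_eq (A : Type) (P : A -> Prop) x y (p : P x) (q : P y) :
  x = y -> exist P x p = exist P y q.
Proof. by move=> e; subst y; congr exist; apply: proof_irrelevance. Qed.

Section FormalSums.
Variable C : AddCat.
Implicit Types s t : FS C.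

Definition negs s : FS C := [seq (- p.1, p.2) | p <- s].

Lemma isobP (a b : Obj C) : reflect (isoObj a b) (isob a b).
Proof. by rewrite /isob; case: excluded_middle_informative => h; constructor. Qed.

Lemma isob_l (a a' b : Obj C) : isoObj a a' -> isob a b = isob a' b.
Proof.
move=> h; apply/idP/idP => /isobP h'; apply/isobP.
  exact: isoObj_trans (isoObj_sym h) h'.
exact: isoObj_trans h h'.
Qed.

Lemma coef_cat s t a : coef (s ++ t) a = coef s a + coef t a.
Proof. by rewrite /coef big_cat. Qed.

Lemma coef_negs s a : coef (negs s) a = - coef s a.
Proof.
rewrite /coef big_map -sumrN; apply: eq_bigr => p _ /=.
by case: ifP; rewrite ?oppr0.
Qed.

Lemma coef_nil a : coef ([::] : FS C) a = 0.
Proof. by rewrite /coef big_nil. Qed.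

Lemma coef1 k (x a : Obj C) : coef [:: (k, x)] a = if isob x a then k else 0.
Proof. by rewrite /coef big_seq1. Qed.

Definition scales (k : int) s : FS C := [seq (k * q.1, q.2) | q <- s].

Lemma coef_scales k s a : coef (scales k s) a = k * coef s a.
Proof.
rewrite /coef big_map mulr_sumr; apply: eq_bigr => q _ /=.
by case: ifP; rewrite ?mulr0.
Qed.

Variables (V : zmodType) (g : Obj C -> V).

Lemma fs_eval_cat s t : fs_eval g (s ++ t) = fs_eval g s + fs_eval g t.
Proof. exact: big_cat. Qed.

Lemma fs_eval_negs s : fs_eval g (negs s) = - fs_eval g s.
Proof. by rewrite /fs_eval big_map -sumrN; apply: eq_bigr => q _ /=; rewrite mulrNz. Qed.

Lemma fs_eval_scales k s : fs_eval g (scales k s) = fs_eval g s *~ k.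
Proof.
rewrite /fs_eval big_map mulrz_suml; apply: eq_bigr => q _ /=.
by rewrite mulrC mulrzA.
Qed.

Lemma fs_eval1 k x : fs_eval g [:: (k, x)] = g x *~ k.
Proof. exact: big_seq1. Qed.

Lemma fs_eval_Forall0 (Q : Obj C -> Prop) s :
  (forall x, Q x -> g x = 0) -> List.Forall (fun q => Q q.2) s -> fs_eval g s = 0.
Proof.
move=> hQ; elim=> [|q {}s hq _ IH]; first exact: big_nil.
by rewrite /fs_eval big_cons -/(fs_eval g s) IH hQ // mul0rz addr0.
Qed.

Hypothesis g_iso : forall a b, isoObj a b -> g a = g b.

(* Group all terms on the iso class of the first object; they cancel, and the
   rest is a shorter formal sum with the same (zero) coefficients. *)
Lemma fs_eval_coef0 s : (forall a, coef s a = 0) -> fs_eval g s = 0.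
Proof.
elim: {s}(size s).+1 {-2}s (ltnSn (size s)) => // m IH s hs hc.
case: s hs hc => [|p s'] hs hc; first exact: big_nil.
set s := p :: s' in hs hc *; set x := p.2.
rewrite /fs_eval (bigID (fun q => isob q.2 x)) /=.
rewrite (eq_bigr (fun q => g x *~ q.1)); last by move=> q /isobP h; rewrite (g_iso h).
rewrite -mulrz_sumr.
have -> : \sum_(q <- s | isob q.2 x) q.1 = coef s x by rewrite /coef big_mkcond.
rewrite hc mulr0z add0r -big_filter; apply: IH.
  rewrite size_filter /= (introT (isobP _ _) (isoObj_refl x)) /= add0n.
  by have := count_size (fun i => ~~ isob i.2 x) s'; move: hs; rewrite /s /=; lia.
move=> y; rewrite /coef big_filter.
case: (boolP (isob x y)) => hxy.
  rewrite big1 // => q hq; case: ifP => // hqy; case/negP: hq.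
  by apply/isobP; apply: isoObj_trans (isobP _ _ hqy) (isoObj_sym (isobP _ _ hxy)).
have := hc y; rewrite /coef (bigID (fun q => isob q.2 x)) /= big1 ?add0r //.
move=> q hq; case: ifP => // hqy; case/negP: hxy.
by apply/isobP; apply: isoObj_trans (isoObj_sym (isobP _ _ hq)) (isobP _ _ hqy).
Qed.

End FormalSums.

Section GrothendieckGroup.
Variables (C : AddCat) (S : AddAuto C) (n : nat) (N : nSseq S n -> Prop).

Lemma inR_ext (f f' : Obj C -> int) : (forall a, f a = f' a) -> inR N f -> inR N f'.
Proof. by move=> e [L [k [hL hf]]]; exists L, k; split=> // a; rewrite -e hf. Qed.

Lemma inR0 : inR N (fun _ => 0).
Proof.
exists [::], 0; split; first by constructor.
by move=> a; rewrite big_nil mul0r add0r; case: ifP.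
Qed.

Lemma inRD f f' : inR N f -> inR N f' -> inR N (fun a => f a + f' a).
Proof.
move=> [L [k [hL hf]]] [L' [k' [hL' hf']]]; exists (L ++ L'), (k + k'); split.
  exact/List.Forall_app.
move=> a; rewrite hf hf' big_cat addrACA; congr (_ + _).
by case: ifP; rewrite ?addr0 // mulrDl.
Qed.

Lemma inRN f : inR N f -> inR N (fun a => - f a).
Proof.
move=> [L [k [hL hf]]]; exists [seq (- p.1, p.2) | p <- L], (- k); split.
  by apply/List.Forall_map; apply: List.Forall_impl hL.
move=> a; rewrite hf big_map opprD -sumrN; congr (_ + _).
  by apply: eq_bigr => p _ /=; rewrite mulNr.
by case: ifP; rewrite ?oppr0 // mulNr.
Qed.

Lemma inR_chi A : N A -> inR N (coef (chi A)).
Proof.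
move=> NA; exists [:: (1, A)], 0; split; first by constructor.
by move=> a; rewrite big_seq1 mul1r mul0r; case: ifP; rewrite addr0.
Qed.

Lemma feq_coef (s t : FS C) : (forall a, coef s a = coef t a) -> feq N s t.
Proof. by move=> e; apply: inR_ext inR0 => a; rewrite e subrr. Qed.

Lemma feq_refl s : feq N s s.
Proof. exact: feq_coef. Qed.

Lemma feq_sym s t : feq N s t -> feq N t s.
Proof. by move=> h; apply: inR_ext (inRN h) => a; rewrite opprB. Qed.

Lemma feq_trans s t u : feq N s t -> feq N t u -> feq N s u.
Proof. by move=> h1 h2; apply: inR_ext (inRD h1 h2) => a; rewrite addrA subrK. Qed.

Lemma cls_eq s t : feq N s t -> cls N s = cls N t.
Proof.
move=> h; apply: exist_eq; apply: functional_extensionality => u.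
apply: propositional_extensionality; split; first exact: feq_trans (feq_sym h).
exact: feq_trans h.
Qed.

Lemma cls_feq s t : cls N s = cls N t -> feq N s t.
Proof. by move=> h; change (proj1_sig (cls N s) t); rewrite h; apply: feq_refl. Qed.

Lemma K0reprK (X : K0 N) : cls N (K0repr X) = X.
Proof.
rewrite /K0repr; case: (constructive_indefinite_description _ _) => s0 e /=.
case: X e => P pf /= e; subst P; rewrite /cls; congr exist.
exact: proof_irrelevance.
Qed.

Lemma K0_ind (X : K0 N) : exists s, X = cls N s.
Proof. by exists (K0repr X); rewrite K0reprK. Qed.

Lemma feq_repr s : feq N (K0repr (cls N s)) s.
Proof. by apply: cls_feq; rewrite K0reprK. Qed.

Lemma K0addE s t : K0add (cls N s) (cls N t) = cls N (s ++ t).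
Proof.
apply: cls_eq; apply: inR_ext (inRD (feq_repr s) (feq_repr t)) => a.
by rewrite !coef_cat; lia.
Qed.

Lemma K0oppE s : K0opp (cls N s) = cls N (negs s).
Proof.
apply: cls_eq; apply: inR_ext (inRN (feq_repr s)) => a.
by rewrite !coef_negs; lia.
Qed.

Lemma K0addA : associative (@K0add C S n N).
Proof.
move=> X Y Z; have [x ->] := K0_ind X; have [y ->] := K0_ind Y; have [z ->] := K0_ind Z.
by rewrite !K0addE catA.
Qed.

Lemma K0addC : commutative (@K0add C S n N).
Proof.
move=> X Y; have [x ->] := K0_ind X; have [y ->] := K0_ind Y.
by rewrite !K0addE; apply: cls_eq; apply: feq_coef => a; rewrite !coef_cat addrC.
Qed.

Lemma K0add0 : left_id (@K0zero C S n N) (@K0add C S n N).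
Proof. by move=> X; have [x ->] := K0_ind X; rewrite /K0zero K0addE. Qed.

Lemma K0addN : left_inverse (@K0zero C S n N) (@K0opp C S n N) (@K0add C S n N).
Proof.
move=> X; have [x ->] := K0_ind X; rewrite K0oppE K0addE; apply: cls_eq.
by apply: feq_coef => a; rewrite coef_cat coef_negs coef_nil addNr.
Qed.

End GrothendieckGroup.

HB.instance Definition _ C S n N := boolp.gen_eqMixin (@K0 C S n N).
HB.instance Definition _ C S n N := boolp.gen_choiceMixin (@K0 C S n N).
HB.instance Definition _ C S n N := GRing.isZmodule.Build (@K0 C S n N)
  (@K0addA C S n N) (@K0addC C S n N) (@K0add0 C S n N) (@K0addN C S n N).

Section K0Classes.
Variables (C : AddCat) (S : AddAuto C) (n : nat) (N : nSseq S n -> Prop).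
Hypothesis hN : IsNang (fun _ => True) N.
Local Notation g := (@K0cl C S n N).

Lemma cls_cat s t : cls N (s ++ t) = cls N s + cls N t.
Proof. by rewrite -K0addE. Qed.

Lemma cls_negs s : cls N (negs s) = - cls N s.
Proof. by rewrite -K0oppE. Qed.

Lemma cls1 k (x : Obj C) : cls N [:: (k, x)] = g x *~ k.
Proof.
have clsP m : cls N [:: (Posz m, x)] = g x *+ m.
  elim: m => [|m IH].
    by apply: cls_eq; apply: feq_coef => a; rewrite coef1 coef_nil; case: ifP.
  rewrite mulrS -IH /g /K0cl -cls_cat; apply: cls_eq; apply: feq_coef => a.
  by rewrite coef_cat !coef1; case: ifP => //; rewrite -addn1 PoszD addrC.
case: k => m; first exact: clsP.
rewrite NegzE mulrNz -pmulrn -clsP -cls_negs; apply: cls_eq; apply: feq_coef => a.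
by rewrite coef_negs !coef1; case: ifP; rewrite ?oppr0.
Qed.

Lemma cls_fs_eval (s : FS C) : cls N s = fs_eval g s.
Proof.
elim: s => [|[k x] s IH]; first by rewrite /fs_eval big_nil.
by rewrite /fs_eval big_cons -/(fs_eval g s) -IH -cls1 -cls_cat.
Qed.

Lemma altsum_K0cl A : N A -> altsum g A = 0.
Proof.
move=> NA; rewrite -fs_eval_chi -cls_fs_eval; apply: cls_eq.
by apply: inR_ext (inR_chi NA) => a; rewrite coef_nil subr0.
Qed.

Lemma K0cl_iso a b : isoObj a b -> g a = g b.
Proof. by move=> h; apply: cls_eq; apply: feq_coef => y; rewrite !coef1 (isob_l _ h). Qed.

Hypothesis hodd : odd n.
Hypothesis hn : (2 < n)%N.

Lemma K0cl_zobj : g zobj = 0.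
Proof. by rewrite -(altsum_triv_zobj S g hodd) altsum_K0cl //; apply: (N_triv hN). Qed.

Lemma K0cl_Sob x : g (Sob S x) = - g x.
Proof.
apply/eqP; rewrite -addr_eq0 addrC.
rewrite -(@altsum_rot_triv C S n _ _ K0cl_zobj x) // altsum_K0cl //.
exact/(rot_N hN)/(N_triv hN).
Qed.

Lemma K0cl_bsum x y : g (bsum x y) = g x + g y.
Proof.
have [Y <-] := Sob_surj S y.
have /altsum_K0cl : N (dsum (triv S n x) (iter n.-1 (@rot C S n) (triv S n Y))).
  by apply: (N_sum hN); [apply: (N_triv hN) | apply/(iter_rot_N hN)/(N_triv hN)].
rewrite (altsum_triv_dsum_rot S K0cl_iso K0cl_zobj x Y hn).
rewrite (K0cl_iso (isoObj_bsum0 _ (isZero_zobj C))).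
rewrite (K0cl_iso (isoObj_trans (isoObj_bsumC _ _) (isoObj_bsum0 _ (isZero_zobj C)))).
by move/eqP; rewrite addrAC subr_eq0 => /eqP.
Qed.

Lemma K0cl_mulz x k : exists b, g x *~ k = g b.
Proof.
have hP m : exists b, g x *+ m = g b.
  elim: m => [|m [b IH]]; first by exists zobj; rewrite mulr0n K0cl_zobj.
  by exists (bsum x b); rewrite mulrS IH K0cl_bsum.
case: k => m; first exact: hP.
have [b hb] := hP m.+1; exists (Sob S b).
by rewrite NegzE mulrNz K0cl_Sob /intmul hb.
Qed.

Lemma K0cl_surj (X : K0 N) : exists a, X = g a.
Proof.
have [s ->] := K0_ind X; rewrite cls_fs_eval.
elim: s => [|[k x] s [a IH]]; first by exists zobj; rewrite /fs_eval big_nil K0cl_zobj.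
have [b hb] := K0cl_mulz x k.
by exists (bsum b a); rewrite /fs_eval big_cons -/(fs_eval g s) IH hb K0cl_bsum.
Qed.

End K0Classes.

(* Universal property of [K0]: an iso-invariant map whose alternating sums vanish
   on n-angles factors through [cls] (for odd [n] the extra relation [<0>] is absent). *)
Lemma fs_eval_cls (C : AddCat) (S : AddAuto C) (n : nat) (N : nSseq S n -> Prop)
    (V : zmodType) (g : Obj C -> V) :
  odd n -> (forall a b, isoObj a b -> g a = g b) ->
  (forall A, N A -> altsum g A = 0) ->
  forall s t, cls N s = cls N t -> fs_eval g s = fs_eval g t.
Proof.
move=> hodd g_iso g_angle s t /cls_feq [L [k [hL hc]]].
pose chis (L : seq (int * nSseq S n)) : FS C :=
  flatten [seq scales q.1 (chi q.2) | q <- L].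
have coef_chis a : coef (chis L) a = \sum_(q <- L) q.1 * coef (chi q.2) a.
  elim: {hL hc}L => [|q L IH]; first by rewrite big_nil coef_nil.
  by rewrite big_cons /= coef_cat coef_scales IH.
have fs_eval_chis : fs_eval g (chis L) = 0.
  elim: L hL {hc coef_chis} => [|q L IH] hL; first exact: big_nil.
  inversion hL; rewrite /= fs_eval_cat IH // addr0 fs_eval_scales.
  by rewrite fs_eval_chi g_angle // mul0rz.
have : fs_eval g (s ++ negs t ++ negs (chis L)) = 0.
  apply: fs_eval_coef0 => // a; rewrite !coef_cat !coef_negs coef_chis.
  by have := hc a; rewrite hodd addr0; lia.
rewrite !fs_eval_cat !fs_eval_negs fs_eval_chis oppr0 addr0 => /eqP.
by rewrite subr_eq0 => /eqP.
Qed.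

Section Padding.
Variables (C : AddCat) (S : AddAuto C) (n : nat) (N : nSseq S n -> Prop).
Hypothesis hN : IsNang (fun _ => True) N.
Hypothesis hn : (2 < n)%N.

(* The n-angle with [Sob S Y] in positions [m] and [m.+1] and zero objects elsewhere. *)
Definition triv_at (m : nat) (Y : Obj C) : nSseq S n :=
  if m == 0%N then triv S n (Sob S Y) else iter (n - m) (@rot C S n) (triv S n Y).

Lemma triv_at_N m Y : N (triv_at m Y).
Proof.
rewrite /triv_at; case: ifP => _; first exact: (N_triv hN).
exact/(iter_rot_N hN)/(N_triv hN).
Qed.

Lemma sob_triv_at m Y i : (m.+1 < n)%N -> (i < n)%N ->
  (((i == m) || (i == m.+1)) -> sob (triv_at m Y) i = Sob S Y) /\
  (~~ ((i == m) || (i == m.+1)) -> isZero (sob (triv_at m Y) i)).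
Proof.
move=> hm hi; rewrite /triv_at; case: (eqVneq m 0%N) => [->|m0] /=.
  by case: i hi => [|[|i]] hi /=; split => // _; apply: isZero_zobj.
rewrite sob_iter_rot //; last by lia.
rewrite /= !tobE; case: ifP => h1.
  have -> : (i + (n - m) <= 1)%N = false by lia.
  have -> : ((i == m) || (i == m.+1)) = false by lia.
  by split=> // _; apply: isZero_zobj.
case: ifP => h2; first by have -> : ((i == m) || (i == m.+1)) = true by lia.
have -> : ((i == m) || (i == m.+1)) = false by lia.
by split=> // _; apply/isZero_Sob/isZero_zobj.
Qed.

Variables (Q : Obj C -> Prop) (good : nSseq S n -> Prop) (s0 : nat).
Hypothesis Q_iso : forall a b, isoObj a b -> Q a -> Q b.
Hypothesis Q_bsum0 : forall x z, Q x -> isZero z -> Q (bsum x z).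
Hypothesis Q_complement : forall x, exists Y, Q (bsum x (Sob S Y)).
Hypothesis good_dsum : forall T T', good T -> good T' -> good (dsum T T').
Hypothesis good_triv_at : forall m Y, (s0 <= m)%N -> (m.+1 < n)%N -> good (triv_at m Y).
Hypothesis good_zobj : good (triv S n zobj).

(* Adding [triv_at m Y] for a complement [Sob S Y] of the current [m]-th object
   puts that object into [Q] and changes only positions [m] and [m.+1]. *)
Lemma exists_padding (A : nSseq S n) m : (s0 <= m)%N -> (m <= n.-1)%N ->
  exists T : nSseq S n, [/\ N T, good T, (forall i, (i < s0)%N -> isZero (sob T i)) &
    (forall i, (s0 <= i)%N -> (i < m)%N -> Q (bsum (sob A i) (sob T i)))].
Proof.
have triv_zobj : [/\ N (triv S n zobj), good (triv S n zobj) &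
    forall i, isZero (sob (triv S n zobj) i)].
  split=> //; first exact: (N_triv hN).
  by move=> i /=; rewrite tobE; case: ifP => _; apply: isZero_zobj.
elim: m => [|m IH] h0 h1.
  by case: triv_zobj => NT gT zT; exists (triv S n zobj); split.
case: (ltnP m s0) => hs.
  case: triv_zobj => NT gT zT; exists (triv S n zobj); split=> // i h2 h3; lia.
have [T [NT gT zT qT]] := IH hs (ltnW h1).
have [Y hY] := Q_complement (bsum (sob A m) (sob T m)).
exists (dsum T (triv_at m Y)); split.
- by apply: (N_sum hN) => //; apply: triv_at_N.
- by apply: good_dsum => //; apply: good_triv_at => //; lia.
- move=> i hi /=; apply: isZero_bsum; first exact: zT.
  by apply: (sob_triv_at Y (i := i) (m := m) _ _).2; lia.
move=> i hi1 hi2 /=.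
have hsh := sob_triv_at Y (i := i) (m := m) ltac:(lia) ltac:(lia).
apply: Q_iso (isoObj_sym (isoObj_bsumA _ _ _)) _.
case: (ltnP i m) => him; first by apply: Q_bsum0; [apply: qT | apply: hsh.2; lia].
have e : i = m by lia.
by subst i; rewrite hsh.1 ?eqxx.
Qed.

End Padding.

Record DenseComplete (C : AddCat) (S : AddAuto C) (n : nat) (N : nSseq S n -> Prop) := {
  dc_mem : Obj C -> Prop;
  dc_angles : IsNang (fun _ => True) N;
  dc_n : (2 < n)%N;
  dc_iso : forall a b, isoObj a b -> dc_mem a -> dc_mem b;
  dc_zobj : dc_mem zobj;
  dc_bsum : forall a b, dc_mem a -> dc_mem b -> dc_mem (bsum a b);
  dc_dense : dense dc_mem;
  dc_complete : complete N dc_mem }.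

Section StableEquivalence.
Variables (C : AddCat) (S : AddAuto C) (n : nat) (N : nSseq S n -> Prop).
Variable D : DenseComplete N.
Local Notation P := (dc_mem D).

Lemma dc_isZero z : isZero z -> P z.
Proof. by move=> hz; apply: dc_iso (dc_zobj D); apply: isoObj_zero (isZero_zobj C) hz. Qed.

Lemma dc_complement x : exists c, P (bsum x c).
Proof.
have [a [c [ha hi]]] := dc_dense D x.
by exists c; apply: dc_iso (isoObj_sym hi) ha.
Qed.

(* Completeness applied to the n-angle [x (+) 0 -> x (+) y -> 0 (+) y -> 0 -> ...], [y = S Y]. *)
Lemma dc_cancel x y : P (bsum x y) -> P y -> P x.
Proof.
move=> hxy hy; have [Y eY] := Sob_surj S y.
have hn := dc_n D; have hN := dc_angles D.
set A := dsum (triv S n x) (iter n.-1 (@rot C S n) (triv S n Y)).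
have NA : N A.
  by apply: (N_sum hN); [apply: (N_triv hN) | apply/(iter_rot_N hN)/(N_triv hN)].
have := @dc_complete _ _ _ _ D _ NA 0 ltac:(lia).
rewrite /A /= sob_iter_rot //=; try lia.
have -> : (0 + n.-1 < n)%N by lia.
rewrite tobE; have -> : (0 + n.-1 <= 1)%N = false by lia.
move=> h; apply: (dc_iso (isoObj_bsum0 _ (isZero_zobj C))); apply: h => i hi ne.
rewrite sob_iter_rot //=; last by lia.
case: i hi ne => [|[|[|i]]] //= hi _.
- have -> : (1 + n.-1 < n)%N = false by lia.
  have -> : (1 + n.-1 - n)%N = 0%N by lia.
  by rewrite /= eY.
- have -> : (2 + n.-1 < n)%N = false by lia.
  have -> : (2 + n.-1 - n)%N = 1%N by lia.
  by rewrite /= eY; apply: dc_bsum => //; apply: dc_zobj.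
have -> : (i.+3 + n.-1 < n)%N = false by lia.
have -> : (i.+3 + n.-1 - n)%N = i.+2 by lia.
by apply: dc_isZero; apply: isZero_bsum; [apply: isZero_zobj | apply/isZero_Sob/isZero_zobj].
Qed.

Definition stably_eq (a b : Obj C) := exists c, P (bsum a c) /\ P (bsum b c).

Lemma stably_eq_refl a : stably_eq a a.
Proof. by have [c hc] := dc_complement a; exists c. Qed.

Lemma stably_eq_sym a b : stably_eq a b -> stably_eq b a.
Proof. by move=> [c [h1 h2]]; exists c. Qed.

Lemma stably_eq_trans a b e : stably_eq a b -> stably_eq b e -> stably_eq a e.
Proof.
move=> [c [hac hbc]] [d [hbd hed]]; exists (bsum d (bsum b c)); split.
  apply: (dc_iso _ (dc_bsum hac hbd)).
  apply: isoObj_trans (isoObj_bsumACA a c b d) _.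
  apply: isoObj_trans (isoObj_bsum (isoObj_refl _) (isoObj_bsumC c d)) _.
  apply: isoObj_trans (isoObj_bsumACA a b d c) _.
  exact: isoObj_sym (isoObj_bsumA _ _ _).
apply: (dc_iso _ (dc_bsum hed hbc)).
exact: isoObj_sym (isoObj_bsumA _ _ _).
Qed.

Lemma stably_eq_iso a b : isoObj a b -> stably_eq a b.
Proof.
move=> h; have [c hc] := dc_complement a; exists c; split => //.
by apply: dc_iso hc; apply: isoObj_bsum => //; apply: isoObj_refl.
Qed.

Lemma stably_eq_bsuml a a' b : stably_eq a a' -> stably_eq (bsum a b) (bsum a' b).
Proof.
move=> [c [h1 h2]]; have [c' hc'] := dc_complement b; exists (bsum c c'); split.
  by apply: (dc_iso _ (dc_bsum h1 hc')); apply: isoObj_sym; apply: isoObj_bsumACA.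
by apply: (dc_iso _ (dc_bsum h2 hc')); apply: isoObj_sym; apply: isoObj_bsumACA.
Qed.

Lemma stably_eq_bsum a a' b b' :
  stably_eq a a' -> stably_eq b b' -> stably_eq (bsum a b) (bsum a' b').
Proof.
move=> h1 h2; apply: stably_eq_trans (stably_eq_bsuml b h1) _.
apply: stably_eq_trans (stably_eq_iso (isoObj_bsumC _ _)) _.
apply: stably_eq_trans (stably_eq_bsuml a' h2) _.
exact: stably_eq_iso (isoObj_bsumC _ _).
Qed.

Lemma stably_eq0 a : stably_eq a zobj <-> P a.
Proof.
split; last by move=> h; exists zobj; split; apply: dc_bsum => //; apply: dc_zobj.
move=> [c [h1 h2]]; apply: dc_cancel h1 _; apply: dc_iso h2.
exact: isoObj_trans (isoObj_bsumC _ _) (isoObj_bsum0 _ (isZero_zobj C)).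
Qed.

(* Objects modulo stable equivalence, a group under [bsum]: in effect [K0 / Im K0 P]. *)
Definition StabK := {X : Obj C -> Prop | exists a, X = stably_eq a}.
Definition stcl (a : Obj C) : StabK := exist _ (stably_eq a) (ex_intro _ a erefl).
Definition strepr (X : StabK) : Obj C :=
  proj1_sig (constructive_indefinite_description _ (proj2_sig X)).

Lemma stcl_eq a b : stably_eq a b -> stcl a = stcl b.
Proof.
move=> h; apply: exist_eq; apply: functional_extensionality => u.
apply: propositional_extensionality; split; first exact: stably_eq_trans (stably_eq_sym h).
exact: stably_eq_trans h.
Qed.

Lemma stcl_stably_eq a b : stcl a = stcl b -> stably_eq a b.
Proof. by move=> h; change (proj1_sig (stcl a) b); rewrite h; apply: stably_eq_refl. Qed.

Lemma streprK X : stcl (strepr X) = X.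
Proof.
rewrite /strepr; case: (constructive_indefinite_description _ _) => s0 e /=.
case: X e => Q pf /= e; subst Q; rewrite /stcl; congr exist.
exact: proof_irrelevance.
Qed.

Lemma StabK_ind X : exists a, X = stcl a.
Proof. by exists (strepr X); rewrite streprK. Qed.

Lemma strepr_stcl a : stably_eq (strepr (stcl a)) a.
Proof. by apply: stcl_stably_eq; rewrite streprK. Qed.

Definition stinv (x : Obj C) : Obj C :=
  proj1_sig (constructive_indefinite_description _ (dc_complement x)).

Lemma stinvP x : P (bsum x (stinv x)).
Proof. by rewrite /stinv; case: (constructive_indefinite_description _ _). Qed.

Definition stadd (X Y : StabK) : StabK := stcl (bsum (strepr X) (strepr Y)).
Definition stopp (X : StabK) : StabK := stcl (stinv (strepr X)).
Definition stzero : StabK := stcl zobj.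

Lemma staddE a b : stadd (stcl a) (stcl b) = stcl (bsum a b).
Proof. by apply: stcl_eq; apply: stably_eq_bsum; apply: strepr_stcl. Qed.

Lemma staddA : associative stadd.
Proof.
move=> X Y Z.
have [x ->] := StabK_ind X; have [y ->] := StabK_ind Y; have [z ->] := StabK_ind Z.
by rewrite !staddE; apply/stcl_eq/stably_eq_iso/isoObj_bsumA.
Qed.

Lemma staddC : commutative stadd.
Proof.
move=> X Y; have [x ->] := StabK_ind X; have [y ->] := StabK_ind Y.
by rewrite !staddE; apply/stcl_eq/stably_eq_iso/isoObj_bsumC.
Qed.

Lemma stadd0 : left_id stzero stadd.
Proof.
move=> X; have [x ->] := StabK_ind X; rewrite /stzero staddE.
apply/stcl_eq/stably_eq_iso.
exact: isoObj_trans (isoObj_bsumC _ _) (isoObj_bsum0 _ (isZero_zobj C)).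
Qed.

Lemma staddN : left_inverse stzero stopp stadd.
Proof.
move=> X; rewrite /stopp -{2}(streprK X) staddE /stzero; apply/stcl_eq/stably_eq0.
by apply: dc_iso (stinvP (strepr X)); apply: isoObj_bsumC.
Qed.

End StableEquivalence.

HB.instance Definition _ C S n N D := boolp.gen_eqMixin (@StabK C S n N D).
HB.instance Definition _ C S n N D := boolp.gen_choiceMixin (@StabK C S n N D).
HB.instance Definition _ C S n N D := GRing.isZmodule.Build (@StabK C S n N D)
  (@staddA C S n N D) (@staddC C S n N D) (@stadd0 C S n N D) (@staddN C S n N D).

Section DenseCompleteImage.
Variables (C : AddCat) (S : AddAuto C) (n : nat) (N : nSseq S n -> Prop).
Variable D : DenseComplete N.
Hypothesis hodd : odd n.
Local Notation P := (dc_mem D).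
Local Notation st := (@stcl C S n N D).

Lemma stcl_iso a b : isoObj a b -> st a = st b.
Proof. by move=> h; apply/stcl_eq/stably_eq_iso. Qed.

Lemma stcl_bsum a b : st (bsum a b) = st a + st b.
Proof. by rewrite -staddE. Qed.

Lemma stcl_eq0 a : st a = 0 <-> P a.
Proof. by split => [/stcl_stably_eq/stably_eq0 // | /stably_eq0 h]; apply: stcl_eq. Qed.

(* Pad an n-angle [A] by an n-angle [T] with [altsum st T = 0] so that
   [A (+) T] lies in [P]; completeness handles the last object. *)
Lemma altsum_stcl A : N A -> altsum st A = 0.
Proof.
move=> NA; have hn := dc_n D; have hN := dc_angles D.
have P_bsum0 x z : P x -> isZero z -> P (bsum x z).
  by move=> hx hz; apply: dc_bsum hx (dc_isZero D hz).
have P_complement x : exists Y, P (bsum x (Sob S Y)).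
  by have [c hc] := dc_complement D x; have [Y eY] := Sob_surj S c; exists Y; rewrite eY.
have alt_dsum (T T' : nSseq S n) : altsum st T = 0 -> altsum st T' = 0 -> altsum st (dsum T T') = 0.
  by move=> h1 h2; rewrite altsum_dsum ?h1 ?h2 ?addr0 //; apply: stcl_bsum.
have alt_triv_at m Y : (0 <= m)%N -> (m.+1 < n)%N -> altsum st (triv_at S n m Y) = 0.
  move=> _ hm; rewrite /triv_at; case: ifP => m0; first by apply: altsum_triv => //; lia.
  by apply: altsum_iter_rot_triv => //; try apply: stcl_iso; lia.
have alt_zobj : altsum st (triv S n zobj) = 0 by apply: altsum_triv => //; lia.
have [T [NT altT _ qT]] := exists_padding hN hn (@dc_iso _ _ _ _ D) P_bsum0 P_complement
  alt_dsum alt_triv_at alt_zobj A (leq0n n.-1) (leqnn _).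
have NAT : N (dsum A T) by apply: (N_sum hN).
have inP_AT i : (i < n)%N -> P (sob (dsum A T) i).
  move=> hi; case: (ltnP i n.-1) => hi'; first exact: qT.
  have -> : i = n.-1 by lia.
  apply: (@dc_complete _ _ _ _ D _ NAT n.-1); first by lia.
  by move=> k hk nk; apply: qT => //; lia.
have : altsum st (dsum A T) = 0.
  rewrite /altsum big1_seq // => i; rewrite mem_iota add0n => /andP [_ hi].
  by have /stcl_eq0 -> := inP_AT i hi; rewrite mul0rz.
by rewrite altsum_dsum ?altT ?addr0 //; apply: stcl_bsum.
Qed.

Lemma ImK0_K0cl a : ImK0 (NC := N) P (K0cl N a) -> P a.
Proof.
move=> [s [hs /(fs_eval_cls hodd (@stcl_iso) altsum_stcl)]].
rewrite fs_eval1 mulr1z (fs_eval_Forall0 (Q := P)) //.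
  by move/stcl_eq0.
by move=> x /stcl_eq0.
Qed.

End DenseCompleteImage.

(* [A (+) T] with its first two objects replaced by those of [A]; isomorphic to
   [A (+) T] when [T] starts with two zero objects. *)
Section FixFirstTwo.
Variables (C : AddCat) (S : AddAuto C) (k : nat) (A T : nSseq S k.+3).

Definition ffob (i : nat) : Obj C :=
  match i with 0 => sob A 0 | 1 => sob A 1 | _ => bsum (sob A i) (sob T i) end.

Definition ffmor (i : nat) : Hom (ffob i) (ffob i.+1) :=
  match i as i0 return Hom (ffob i0) (ffob i0.+1) with
  | 0 => smor A 0
  | 1 => comp (bin1 (sob A 2) (sob T 2)) (smor A 1)
  | j.+2 => dmap (smor A j.+2) (smor T j.+2)
  end.

Definition fix_first_two : nSseq S k.+3 :=
  @NSeq C S k.+3 ffob ffmor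
    (comp (Smor S (bpr1 (sob A 0) (sob T 0))) (slast (dsum A T))).

Definition ffphi (i : nat) : Hom (sob (dsum A T) i) (sob fix_first_two i) :=
  match i as i0 return Hom (bsum (sob A i0) (sob T i0)) (ffob i0) with
  | 0 => bpr1 _ _
  | 1 => bpr1 _ _
  | j.+2 => idm _
  end.

Lemma seq_iso_fix_first_two :
  isZero (sob T 0) -> isZero (sob T 1) -> seq_iso (dsum A T) fix_first_two.
Proof.
move=> z0 z1; exists ffphi; split; last first.
  by case=> [|[|i]] _ /=; [apply: isIso_bpr1 | apply: isIso_bpr1 | apply: isIso_id].
split; last by rewrite /= compm1.
case=> [|[|i]] _ /=; rewrite /dmap; first by csimp.
  by rewrite (z1.1 _ (smor T 1)); csimp.
by csimp.
Qed.

End FixFirstTwo.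

Section Subgroups.
Variables (C : AddCat) (S : AddAuto C) (n : nat) (N : nSseq S n -> Prop).
Variables (H : K0 N -> Prop) (hH : isSubgroup H).

Lemma subgroup0 : H 0. Proof. by case: hH. Qed.

Lemma subgroupD x y : H x -> H y -> H (x + y).
Proof. by case: hH => _ h _; apply: h. Qed.

Lemma subgroupN x : H x -> H (- x).
Proof. by case: hH => _ _ h; apply: h. Qed.

Lemma subgroupMz x m : H x -> H (x *~ m).
Proof.
move=> hx; have hP j : H (x *+ j).
  by elim: j => [|j IH]; [rewrite mulr0n; apply: subgroup0 | rewrite mulrS; apply: subgroupD].
by case: m => j; [apply: hP | rewrite NegzE mulrNz; apply/subgroupN/hP].
Qed.

End Subgroups.

Section SubgroupSubcategory.
Variables (C : AddCat) (S : AddAuto C) (k : nat) (N : nSseq S k.+3 -> Prop).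
Hypothesis hN : IsNang (fun _ => True) N.
Hypothesis hodd : odd k.+3.
Variables (H : K0 N -> Prop) (hH : isSubgroup H).
Local Notation g := (@K0cl C S k.+3 N).
Local Notation Q := (AH H).

Lemma AH_iso a b : isoObj a b -> Q a -> Q b.
Proof. by move=> h; rewrite /AH (K0cl_iso N h). Qed.

Lemma AH_Sob a : Q a <-> Q (Sob S a).
Proof.
rewrite /AH K0cl_Sob //; split; first exact: (subgroupN hH).
by move/(subgroupN hH); rewrite opprK.
Qed.

Lemma AH_zobj : Q zobj.
Proof. by rewrite /AH K0cl_zobj //; apply: (subgroup0 hH). Qed.

Lemma AH_bsum a b : Q a -> Q b -> Q (bsum a b).
Proof. by rewrite /AH K0cl_bsum //; apply: (subgroupD hH). Qed.

Lemma AH_isZero z : isZero z -> Q z.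
Proof. by move=> hz; apply: AH_iso AH_zobj; apply: isoObj_zero (isZero_zobj C) hz. Qed.

Lemma AH_bsum_Sob x : Q (bsum x (Sob S x)).
Proof. by rewrite /AH K0cl_bsum // K0cl_Sob // addrN; apply: (subgroup0 hH). Qed.

(* In [sum_i (-1)^i [A_i] = 0] all terms but the [j]-th lie in [H]. *)
Lemma AH_complete : complete N Q.
Proof.
move=> A NA j hj hoth.
have := altsum_K0cl NA; rewrite /altsum sum_iota_ord (bigD1 (Ordinal hj)) //=.
move/eqP; rewrite addr_eq0 => /eqP e.
have hs : H (g (sob A j) *~ sgn j).
  rewrite e; apply: (subgroupN hH); apply: big_ind => //; first exact: (subgroup0 hH).
    exact: (subgroupD hH).
  by move=> i hne; apply/(subgroupMz hH)/hoth.
rewrite /AH; have -> : g (sob A j) = g (sob A j) *~ sgn j *~ sgn j by rewrite -mulrzA sgnK.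
exact: (subgroupMz hH).
Qed.

Lemma AH_dense : dense Q.
Proof.
move=> c; exists (bsum c (Sob S c)), (Sob S c).
by split; [apply: AH_bsum_Sob | apply: isoObj_refl].
Qed.

Lemma AH_robj (A : nSseq S k.+3) i : inP Q A -> (i < k.+3)%N -> Q (robj A i).
Proof.
move=> hA hi; rewrite /robj; case: ifP => h; first exact: hA.
by apply: (proj1 (AH_Sob _)); apply: (hA 0%N).
Qed.

(* Pad an n-angle of [C] on [f] so that all its objects but the first two lie in
   [A_H] (the last by completeness), then drop the zero padding at [0] and [1]. *)
Lemma AH_ext (a b : Obj C) (f : Hom a b) : Q a -> Q b ->
  exists A, restrN N Q A /\
    exists (e0 : sob A 0 = a) (e1 : sob A 1 = b), castH e0 e1 (smor A 0) = f.
Proof.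
move=> ha hb; have [A [NA [e0 [e1 ef]]]] := N_ext hN f I I.
have Q_bsum0 x z : Q x -> isZero z -> Q (bsum x z).
  by move=> hx hz; apply: AH_bsum hx (AH_isZero hz).
have Q_complement x : exists Y, Q (bsum x (Sob S Y)) by exists x; apply: AH_bsum_Sob.
have [T [NT _ zT qT]] := @exists_padding C S k.+3 N hN isT Q (fun _ => True) 2
  AH_iso Q_bsum0 Q_complement (fun _ _ _ _ => I) (fun _ _ _ _ => I) I A k.+2 isT (leqnn _).
have NF : N (fix_first_two A T).
  apply: (N_iso hN) (seq_iso_fix_first_two A (zT 0%N isT) (zT 1%N isT)) _ => //.
  exact: (N_sum hN).
have hF i : (i < k.+2)%N -> Q (sob (fix_first_two A T) i).
  by case: i => [|[|i]] hi /=; [rewrite e0 | rewrite e1 | apply: qT].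
exists (fix_first_two A T); split; last by exists e0, e1.
split=> // i hi; case: (ltnP i k.+2) => hik; first exact: hF.
have -> : i = k.+2 by lia.
by apply: AH_complete => // j hj nj; apply: hF; lia.
Qed.

Lemma AH_nang : IsNang Q (restrN N Q).
Proof.
split.
- by move=> A [].
- move=> A B [NA hA] [NB hB]; split; first exact: (N_sum hN).
  by move=> i hi; apply: AH_bsum; [apply: hA | apply: hB].
- by move=> A B hA hB [ND _]; split=> //; apply: (N_summand hN) ND.
- by move=> A B hB hiso [NA _]; split=> //; apply: (N_iso hN) hiso NA.
- move=> a ha; split; first exact: (N_triv hN).
  by move=> i hi /=; rewrite tobE; case: ifP => _ //; apply: AH_zobj.
- by move=> a b f ha hb; apply: AH_ext.
- move=> A hA; split.
    move=> [NA _]; split; first exact: (rot_N hN).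
    by move=> i hi; apply: AH_robj.
  by move=> [NR _]; split=> //; apply: (proj2 (N_rot hN (A := A) (fun _ _ => I))).
- by move=> A B [NA _] [NB _] f0 f1 e; apply: (N_mor hN NA NB e).
move=> A B [NA hA] [NB hB] f0 f1 e.
have [phi [h0 [h1 [hs hc]]]] := N_cone hN NA NB e.
exists phi; do 4!split=> //.
by move=> i hi /=; apply: AH_bsum; [apply: AH_robj | apply: hB].
Qed.

(* [A_H] is an n-angulated subcategory with the identity as comparison [eta]. *)
Lemma AH_nsubcat : nsubcat N Q (restrN N Q).
Proof.
split.
- exact: AH_iso.
- exact: AH_Sob.
- by split; [apply: AH_zobj | apply: AH_bsum].
- exact: AH_nang.
exists (fun a => idm (Sob S a)); split.
- by move=> a _; apply: isIso_id.
- by move=> a b f _ _; rewrite comp1m compm1.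
by move=> [ob mo sl] [NA _]; rewrite /twist /= comp1m.
Qed.

End SubgroupSubcategory.

Section Correspondence.
Variables (C : AddCat) (S : AddAuto C) (n : nat) (N : nSseq S n -> Prop).

Lemma ImK0_subgroup (P : Obj C -> Prop) : isSubgroup (ImK0 (NC := N) P).
Proof.
split.
- by exists [::]; split => //; constructor.
- move=> _ _ [s [hs ->]] [t [ht ->]]; exists (s ++ t); split; first exact/List.Forall_app.
  exact: K0addE.
- move=> _ [s [hs ->]]; exists (negs s); split; last exact: K0oppE.
  by apply/List.Forall_map; apply: List.Forall_impl hs.
Qed.

Hypothesis h3 : (3 <= n)%N.
Hypothesis hodd : odd n.
Hypothesis hN : IsNang (fun _ => True) N.

Lemma AH_inS (H : K0 N -> Prop) : isSubgroup H ->
  nsubcat N (AH H) (restrN N (AH H)) /\ complete N (AH H) /\ dense (AH H).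
Proof.
move=> hH; have [k ek] : exists k, n = k.+3 by exists (n - 3)%N; lia.
subst n; split; first exact: AH_nsubcat.
by split; [apply: AH_complete | apply: AH_dense].
Qed.

Lemma AH_ImK0 (P : Obj C -> Prop) : inS N P -> forall a, AH (ImK0 (NC := N) P) a <-> P a.
Proof.
move=> [[NA [P_iso _ [P_zobj P_bsum] _ _]] [P_complete P_dense]] a.
pose D := {| dc_mem := P; dc_angles := hN; dc_n := h3; dc_iso := P_iso;
             dc_zobj := P_zobj; dc_bsum := P_bsum; dc_dense := P_dense;
             dc_complete := P_complete |}.
split; first exact: (ImK0_K0cl (D := D) hodd).
by move=> ha; exists [:: (1, a)]; split=> //; constructor.
Qed.

Lemma ImK0_AH (H : K0 N -> Prop) : isSubgroup H -> forall x, ImK0 (NC := N) (AH H) x <-> H x.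
Proof.
move=> hH x; split.
  move=> [s [hs ->]]; rewrite cls_fs_eval.
  elim: s hs => [|q s IH] hs; first by rewrite /fs_eval big_nil; case: hH.
  inversion hs; rewrite /fs_eval big_cons.
  by apply: (subgroupD hH); [apply: (subgroupMz hH) | apply: IH].
move=> hx; have [a ea] := K0cl_surj hN hodd h3 x.
by exists [:: (1, a)]; split=> //; constructor => //; rewrite /AH -ea.
Qed.

End Correspondence.

Local Close Scope ring_scope.

Theorem theorem4p6 (n : nat) (C : AddCat) (S : AddAuto C) (N : nSseq S n -> Prop) :
  3 <= n -> odd n -> @IsNang C S n (fun _ => True) N ->
  (forall P, inS N P -> isSubgroup (ImK0 (NC:=N) P)) /\
  (forall H : K0 N -> Prop, isSubgroup H ->
     nsubcat N (AH H) (restrN N (AH H)) /\ complete N (AH H) /\ dense (AH H)) /\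
  (forall P, inS N P -> forall a, AH (ImK0 (NC:=N) P) a <-> P a) /\
  (forall H : K0 N -> Prop, isSubgroup H -> forall x, ImK0 (NC:=N) (AH H) x <-> H x).
Proof.
move=> h3 hodd hN; split; first by move=> P _; apply: ImK0_subgroup.
split; first exact: AH_inS.
by split; [apply: AH_ImK0 | apply: ImK0_AH].
Qed.
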